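(* For every set $\Gamma\cup\{\varphi\}$ of formulas over $\Sigma^\circ$: if $\Gamma\vdash_{\bf mbCcl}\varphi$ then $\Gamma\vDash^{\mathsf{RN}}_{\mathcal{M}_{\bf mbCcl}}\varphi$.
   Context: $\Sigma^\circ$ is the signature with unary $\neg,\circ$ and binary $\wedge,\vee,\to$; formulas are built from a denumerable set of propositional variables. ${\bf mbCcl}$ is the Hilbert calculus with Modus Ponens as only rule and axiom schemata: (Ax1) $\alpha\to(\beta\to\alpha)$; (Ax2) $(\alpha\to(\beta\to\gamma))\to((\alpha\to\beta)\to(\alpha\to\gamma))$; (Ax3) $\alpha\to(\beta\to(\alpha\wedge\beta))$; (Ax4) $(\alpha\wedge\beta)\to\alpha$; (Ax5) $(\alpha\wedge\beta)\to\beta$; (Ax6) $\alpha\to(\alpha\vee\beta)$; (Ax7) $\beta\to(\alpha\vee\beta)$; (Ax8) $(\alpha\to\gamma)\to((\beta\to\gamma)\to((\alpha\vee\beta)\to\gamma))$; (Ax9) $\alpha\vee\neg\alpha$; $\alpha\vee(\alpha\to\beta)$; (bc1) $\circ\alpha\to(\alpha\to(\neg\alpha\to\beta))$; (cl) $\neg(\alpha\wedge\neg\alpha)\to\circ\alpha$. $\Gamma\vdash_{\bf mbCcl}\varphi$ means derivability from $\Gamma$. $\mathcal{A}_{\bf mbCcl}$ is the $\Sigma^\circ$-multialgebra with universe $\{F,t,T\}$, $D=\{t,T\}$, $U=\{F\}$, and multioperations: $x\tilde\vee y=U$ if $x=y=F$, otherwise $D$; $x\tilde\wedge y=U$ if $F\in\{x,y\}$,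 otherwise $D$; $\tilde\neg F=D$, $\tilde\neg t=D$, $\tilde\neg T=U$; $x\tilde\to y=D$ if $x=F$, $x\tilde\to F=U$ if $x\in\{t,T\}$, $x\tilde\to y=D$ if $x,y\in\{t,T\}$; $\tilde\circ F=D$, $\tilde\circ t=U$, $\tilde\circ T=D$. A valuation is a map $\nu$ from formulas to $\{F,t,T\}$ with $\nu(\#\alpha)\in\tilde\#\nu(\alpha)$ for unary $\#$ and $\nu(\alpha\#\beta)\in\nu(\alpha)\tilde\#\nu(\beta)$ for binary $\#$. $\mathcal{F}_{\bf mbCcl}$ is the set of valuations $\nu$ such that $\nu(\alpha)=t$ implies $\nu(\alpha\wedge\neg\alpha)=T$, for every formula $\alpha$. $\mathcal{M}_{\bf mbCcl}=(\mathcal{A}_{\bf mbCcl},D,\mathcal{F}_{\bf mbCcl})$, and $\Gamma\vDash^{\mathsf{RN}}_{\mathcal{M}_{\bf mbCcl}}\varphi$ iff every $\nu\in\mathcal{F}_{\bf mbCcl}$ with $\nu[\Gamma]\subseteq D$ satisfies $\nu(\varphi)\in D$. *)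

Inductive formula : Type :=
| Var : nat -> formula
| Neg : formula -> formula
| Circ : formula -> formula
| And : formula -> formula -> formula
| Or : formula -> formula -> formula
| Imp : formula -> formula -> formula.

Inductive mbCcl_axiom : formula -> Prop :=
| Ax1 : forall a b, mbCcl_axiom (Imp a (Imp b a))
| Ax2 : forall a b c, mbCcl_axiom
    (Imp (Imp a (Imp b c)) (Imp (Imp a b) (Imp a c)))
| Ax3 : forall a b, mbCcl_axiom (Imp a (Imp b (And a b)))
| Ax4 : forall a b, mbCcl_axiom (Imp (And a b) a)
| Ax5 : forall a b, mbCcl_axiom (Imp (And a b) b)
| Ax6 : forall a b, mbCcl_axiom (Imp a (Or a b))
| Ax7 : forall a b, mbCcl_axiom (Imp b (Or a b))
| Ax8 : forall a b c, mbCcl_axiom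
    (Imp (Imp a c) (Imp (Imp b c) (Imp (Or a b) c)))
| Ax9 : forall a, mbCcl_axiom (Or a (Neg a))
| Ax10 : forall a b, mbCcl_axiom (Or a (Imp a b))
| Axbc1 : forall a b, mbCcl_axiom (Imp (Circ a) (Imp a (Imp (Neg a) b)))
| Axcl : forall a, mbCcl_axiom (Imp (Neg (And a (Neg a))) (Circ a)).

Inductive derivable (Gamma : formula -> Prop) : formula -> Prop :=
| d_prem : forall f, Gamma f -> derivable Gamma f
| d_ax : forall f, mbCcl_axiom f -> derivable Gamma f
| d_mp : forall a b, derivable Gamma a -> derivable Gamma (Imp a b) -> derivable Gamma b.

Inductive tv : Type := F | tt_ | TT.
Notation t := tt_.

Definition designated (x : tv) : Prop := x = t \/ x = TT.

(* Multioperations, as set-valued functions: op x y z means z is in x op~ y *)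
Definition in_D (z : tv) : Prop := designated z.
Definition in_U (z : tv) : Prop := z = F.

Definition m_or (x y z : tv) : Prop :=
  if (match x, y with F, F => true | _, _ => false end) then in_U z else in_D z.
Definition m_and (x y z : tv) : Prop :=
  match x, y with
  | F, _ => in_U z
  | _, F => in_U z
  | _, _ => in_D z
  end.
Definition m_neg (x z : tv) : Prop :=
  match x with F => in_D z | tt_ => in_D z | TT => in_U z end.
Definition m_imp (x y z : tv) : Prop :=
  match x, y with
  | F, _ => in_D z
  | _, F => in_U z
  | _, _ => in_D z
  end.
Definition m_circ (x z : tv) : Prop :=
  match x with F => in_D z | tt_ => in_U z | TT => in_D z end.

Definition valuation (v : formula -> tv) : Prop :=
  forall a b,
    m_neg (v a) (v (Neg a)) /\
    m_circ (v a) (v (Circ a)) /\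
    m_and (v a) (v b) (v (And a b)) /\
    m_or (v a) (v b) (v (Or a b)) /\
    m_imp (v a) (v b) (v (Imp a b)).

Definition F_mbCcl (v : formula -> tv) : Prop :=
  valuation v /\ (forall a, v a = t -> v (And a (Neg a)) = TT).

Definition RN_consequence (Gamma : formula -> Prop) (phi : formula) : Prop :=
  forall v, F_mbCcl v -> (forall g, Gamma g -> designated (v g)) -> designated (v phi).

(* First we read off, for
   every connective, the condition under which a valuation gives a compound
   formula a designated value: the multioperations of A_mbCcl are chosen so
   that designation of a compound depends only on the values of its
   immediate subformulas (for instance v(a -> b) is designated iff
   designation of v a implies designation of v b, and v(~a) is designated
   iff v a <> T).  Rewriting with
   these "truth conditions" turns the designation of each axiom instance into
   a finite statement about at most three truth values, checked by case
   analysis; the axiom (cl) additionally needs the restriction defining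
   F_mbCcl.  Modus ponens preserves designation by the truth condition of
   implication, which closes the induction. *)

From Stdlib Require Import Setoid.

Ltac case_on_values v :=
  unfold m_neg, m_circ, m_and, m_or, m_imp, in_D, in_U, designated in *;
  repeat match goal with |- context [v ?f] => destruct (v f) end;
  intuition congruence.

Section TruthConditions.

Variable v : formula -> tv.
Hypothesis Hv : valuation v.

Lemma neg_designated (a : formula) : designated (v (Neg a)) <-> v a <> TT.
Proof. destruct (Hv a a) as (H & _); revert H; case_on_values v. Qed.

Lemma circ_designated (a : formula) : designated (v (Circ a)) <-> v a <> t.
Proof. destruct (Hv a a) as (_ & H & _); revert H; case_on_values v. Qed.

Lemma and_designated (a b : formula) :
  designated (v (And a b)) <-> designated (v a) /\ designated (v b).
Proof. destruct (Hv a b) as (_ & _ & H & _); revert H; case_on_values v. Qed.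

Lemma or_designated (a b : formula) :
  designated (v (Or a b)) <-> designated (v a) \/ designated (v b).
Proof. destruct (Hv a b) as (_ & _ & _ & H & _); revert H; case_on_values v. Qed.

Lemma imp_designated (a b : formula) :
  designated (v (Imp a b)) <-> (designated (v a) -> designated (v b)).
Proof. destruct (Hv a b) as (_ & _ & _ & _ & H); revert H; case_on_values v. Qed.

Lemma mp_designated (a b : formula) :
  designated (v a) -> designated (v (Imp a b)) -> designated (v b).
Proof.
  rewrite imp_designated; auto.
Qed.

End TruthConditions.

(* After rewriting with the truth conditions, each goal only mentions the
   values of the schematic letters, so a case analysis on them suffices;
   for (cl) the restriction of F_mbCcl supplies v(a /\ ~a) = T when v a = t. *)
Lemma axiom_designated (v : formula -> tv) (f : formula) :
  F_mbCcl v -> mbCcl_axiom f -> designated (v f).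
Proof.
  intros [Hv Hcl] Hax.
  destruct Hax;
    repeat first [ rewrite (imp_designated v Hv) | rewrite (or_designated v Hv)
                 | rewrite (and_designated v Hv) | rewrite (neg_designated v Hv)
                 | rewrite (circ_designated v Hv) ];
    try case_on_values v.
  (* (cl) reduces to: v(a /\ ~a) <> T -> v a <> t, which is the
     contrapositive of the restriction defining F_mbCcl. *)
  intros Hnot Ea; apply Hnot, Hcl, Ea.
Qed.

Theorem mainTheorem3 (Gamma : formula -> Prop) (phi : formula) :
  derivable Gamma phi -> RN_consequence Gamma phi.
Proof.
  intros Hder v Hv HGamma.
  induction Hder as [f Hf | f Hax | a b _ IHa _ IHimp].
  - exact (HGamma f Hf).
  - exact (axiom_designated v f Hv Hax).
  - exact (mp_designated v (proj1 Hv) a b IHa IHimp).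
Qed.
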